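(* Let $K<0$ and $d\ge 1$, and let $\mathbb{H}^d_K=\{\mathbf{x}\in\mathbb{R}^{d+1} : \langle \mathbf{x},\mathbf{x}\rangle_L = 1/K,\ x_0>0\}$, where $\langle \mathbf{x},\mathbf{y}\rangle_L=-x_0y_0+\sum_{i=1}^d x_iy_i$. Let $\mathbf{x}_1,\dots,\mathbf{x}_n\in\mathbb{H}^d_K$ with $n\ge 2$, let $\bar{\mathbf{x}}=\frac1n\sum_{i=1}^n \mathbf{x}_i$ be their Euclidean mean in $\mathbb{R}^{d+1}$, and let $\mathbf{m}^{\mathrm{Euc}}=\Pi_K(\bar{\mathbf{x}})$. Then $$ r(\mathbf{m}^{\mathrm{Euc}})\le \frac1n\sum_{i=1}^n r(\mathbf{x}_i),$$ with equality if and only if all the $\mathbf{x}_i$ are identical.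
   Context: For $\mathbf{v}\in\mathbb{R}^{d+1}$ with $\langle\mathbf{v},\mathbf{v}\rangle_L<0$ and $v_0>0$, the Lorentz projection is $\Pi_K(\mathbf{v})=\mathbf{v}/\sqrt{K\langle \mathbf{v},\mathbf{v}\rangle_L}$, the unique positive rescaling of $\mathbf{v}$ lying on $\mathbb{H}^d_K$. The radial depth of $\mathbf{x}\in\mathbb{H}^d_K$ is $r(\mathbf{x})=x_0$ (its $0$-th coordinate). *)

(* R : realType, points of R^{d+1} as row vectors 'rV[R]_(d.+1),
   coordinate 0 is the "time" coordinate x_0. *)
From HB Require Import structures.
From mathcomp Require Import all_boot all_order all_algebra.
From mathcomp Require Import reals.
Set Implicit Arguments. Unset Strict Implicit. Unset Printing Implicit Defensive.
Import Order.TTheory GRing.Theory Num.Theory.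
Local Open Scope ring_scope.

Definition lorentz (R : realType) (d : nat) (x y : 'rV[R]_d.+1) : R :=
  - (x 0 ord0 * y 0 ord0) + \sum_(i < d) x 0 (lift ord0 i) * y 0 (lift ord0 i).

Definition in_hyperboloid (R : realType) (d : nat) (K : R) (x : 'rV[R]_d.+1) : Prop :=
  lorentz x x = K^-1 /\ 0 < x 0 ord0.

Definition lorentz_proj (R : realType) (d : nat) (K : R) (v : 'rV[R]_d.+1) : 'rV[R]_d.+1 :=
  (Num.sqrt (K * lorentz v v))^-1 *: v.

Definition radial (R : realType) (d : nat) (x : 'rV[R]_d.+1) : R := x 0 ord0.

(** For two points [x], [y] of the hyperboloid, [1/K - <x,y>_L] is, up to the
    positive factor [2 x_0 y_0], a sum of squares; so it is nonnegative and
    vanishes only when [x = y].  Expanding [<xbar,xbar>_L] as the average of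
    all the [<x_i,x_j>_L] shows that [K <xbar,xbar>_L >= 1], with equality
    iff all the points coincide.  The projection divides [xbar] by the square
    root of that quantity, hence can only decrease the depth [r(xbar)], which
    is the average of the depths. *)

From mathcomp Require Import all_boot all_order all_algebra.
From mathcomp Require Import reals ring.
Set Implicit Arguments.
Unset Strict Implicit.
Unset Printing Implicit Defensive.

Import Order.TTheory GRing.Theory Num.Theory.
Local Open Scope ring_scope.

Section LorentzForm.
Variables (R : realType) (d : nat).
Implicit Types (x y z : 'rV[R]_d.+1) (c : R).

Lemma lorentzC x y : lorentz x y = lorentz y x.
Proof.
by rewrite /lorentz mulrC; congr (_ + _); apply: eq_bigr => i _; rewrite mulrC.
Qed.

Lemma lorentzDl x y z : lorentz (x + y) z = lorentz x z + lorentz y z.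
Proof.
rewrite /lorentz !mxE; under eq_bigr => i _ do rewrite !mxE mulrDl.
by rewrite big_split /=; ring.
Qed.

Lemma lorentz0l z : lorentz 0 z = 0.
Proof.
rewrite /lorentz mxE mul0r oppr0 add0r.
by apply: big1 => i _; rewrite mxE mul0r.
Qed.

Lemma lorentzZl c x y : lorentz (c *: x) y = c * lorentz x y.
Proof.
rewrite /lorentz mxE; under eq_bigr => i _ do rewrite mxE -mulrA.
by rewrite -mulr_sumr; ring.
Qed.

Lemma lorentz_suml n (xs : 'I_n -> 'rV[R]_d.+1) y :
  lorentz (\sum_(i < n) xs i) y = \sum_(i < n) lorentz (xs i) y.
Proof.
by apply: (big_morph (fun x => lorentz x y)) => [a b|]; rewrite ?lorentzDl ?lorentz0l.
Qed.

Lemma lorentz_scale_sum c n (xs : 'I_n -> 'rV[R]_d.+1) :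
  lorentz (c *: \sum_(i < n) xs i) (c *: \sum_(i < n) xs i) =
  c ^+ 2 * \sum_(i < n) \sum_(j < n) lorentz (xs i) (xs j).
Proof.
rewrite lorentzZl lorentzC lorentzZl mulrA -expr2 lorentz_suml; congr (_ * _).
apply: eq_bigr => i _; rewrite lorentzC lorentz_suml.
by apply: eq_bigr => j _; rewrite lorentzC.
Qed.

Lemma radial_scale_sum c n (xs : 'I_n -> 'rV[R]_d.+1) :
  radial (c *: \sum_(i < n) xs i) = c * \sum_(i < n) radial (xs i).
Proof. by rewrite /radial !mxE summxE. Qed.

Lemma lorentz_gap_sos c x y : lorentz x x = c -> lorentz y y = c ->
  2 * (x 0 ord0 * y 0 ord0) * (c - lorentz x y) =
  - c * (x 0 ord0 - y 0 ord0) ^+ 2 +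
  \sum_(k < d) (y 0 ord0 * x 0 (lift ord0 k) - x 0 ord0 * y 0 (lift ord0 k)) ^+ 2.
Proof.
rewrite /lorentz => hx hy.
set sxx := \sum_(k < d) _ in hx; set syy := \sum_(k < d) _ in hy.
set sxy := \sum_(k < d) _.
have -> : \sum_(k < d) (y 0 ord0 * x 0 (lift ord0 k) - x 0 ord0 * y 0 (lift ord0 k)) ^+ 2 =
    y 0 ord0 ^+ 2 * sxx + x 0 ord0 ^+ 2 * syy - 2 * (x 0 ord0 * y 0 ord0) * sxy.
  by rewrite !mulr_sumr -big_split -sumrB; apply: eq_bigr => k _ /=; ring.
rewrite -[sxx](addNKr (x 0 ord0 * x 0 ord0)) -[syy](addNKr (y 0 ord0 * y 0 ord0)) hx hy.
ring.
Qed.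

End LorentzForm.

Section Hyperboloid.
Variables (R : realType) (d : nat) (K : R).
Hypothesis K_lt0 : K < 0.
Implicit Types x y v : 'rV[R]_d.+1.

Let K_neq0 : K != 0. Proof. exact: ltr0_neq0. Qed.

Let invK_lt0 : - K^-1 > 0. Proof. by rewrite oppr_gt0 invr_lt0. Qed.

Lemma lorentz_gap_ge0 x y : in_hyperboloid K x -> in_hyperboloid K y ->
  0 <= K^-1 - lorentz x y.
Proof.
move=> [hx x0_gt0] [hy y0_gt0].
have xy_gt0 : 0 < 2 * (x 0 ord0 * y 0 ord0) by rewrite !mulr_gt0.
rewrite -(pmulr_rge0 _ xy_gt0) (lorentz_gap_sos hx hy).
apply: addr_ge0; first by rewrite mulr_ge0 ?sqr_ge0 ?(ltW invK_lt0).
by apply: sumr_ge0 => k _; apply: sqr_ge0.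
Qed.

Lemma lorentz_gap_eq0 x y : in_hyperboloid K x -> in_hyperboloid K y ->
  K^-1 - lorentz x y = 0 -> x = y.
Proof.
move=> [hx x0_gt0] [hy y0_gt0] gap0.
have /eqP := lorentz_gap_sos hx hy; rewrite gap0 mulr0 eq_sym.
rewrite paddr_eq0; first last.
- by apply: sumr_ge0 => k _; apply: sqr_ge0.
- by rewrite mulr_ge0 ?sqr_ge0 ?(ltW invK_lt0).
case/andP; rewrite mulf_eq0 (gt_eqF invK_lt0) sqrf_eq0 subr_eq0 /=.
move=> /eqP x0E /eqP /(psumr_eq0P (fun k _ => sqr_ge0 _)) spaceE.
apply/rowP => j; case: (unliftP ord0 j) => [k ->|->] //.
have /eqP := spaceE k isT; rewrite sqrf_eq0 subr_eq0 x0E => /eqP.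
by apply: mulfI; rewrite -x0E gt_eqF.
Qed.

Lemma scale_lorentz_ge1 v : lorentz v v <= K^-1 -> 1 <= K * lorentz v v.
Proof. by rewrite -(mulfV K_neq0) ler_nM2l. Qed.

Lemma sqrt_scale_lorentz_ge1 v : lorentz v v <= K^-1 ->
  1 <= Num.sqrt (K * lorentz v v).
Proof.
by move/scale_lorentz_ge1=> ge1; rewrite -sqrtr1 ler_sqrt // (le_trans ler01).
Qed.

Lemma radial_lorentz_proj v :
  radial (lorentz_proj K v) = (Num.sqrt (K * lorentz v v))^-1 * radial v.
Proof. by rewrite /radial /lorentz_proj mxE. Qed.

Lemma radial_lorentz_proj_le v : lorentz v v <= K^-1 -> 0 <= radial v ->
  radial (lorentz_proj K v) <= radial v.
Proof.
move=> v_in rv_ge0; have s_ge1 := sqrt_scale_lorentz_ge1 v_in.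
by rewrite radial_lorentz_proj ler_piMl // invf_le1 // (lt_le_trans ltr01).
Qed.

Lemma radial_lorentz_proj_eq v : lorentz v v <= K^-1 -> 0 < radial v ->
  (radial (lorentz_proj K v) == radial v) = (lorentz v v == K^-1).
Proof.
move=> v_in rv_gt0; have KL_ge0 := le_trans ler01 (scale_lorentz_ge1 v_in).
rewrite radial_lorentz_proj -{2}[radial v]mul1r (inj_eq (mulIf (lt0r_neq0 rv_gt0))).
rewrite invr_eq1 -sqrtr1 eqr_sqrt ?ler01 //.
by rewrite -(mulfV K_neq0) (inj_eq (mulfI K_neq0)).
Qed.

Variables (n : nat) (xs : 'I_n -> 'rV[R]_d.+1).
Hypotheses (n_gt0 : (0 < n)%N) (xs_in : forall i, in_hyperboloid K (xs i)).

Local Notation xbar := (n%:R^-1 *: \sum_(i < n) xs i).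
Local Notation gaps := (\sum_(i < n) \sum_(j < n) (K^-1 - lorentz (xs i) (xs j))).

Let n_neq0 : n%:R != 0 :> R. Proof. by rewrite pnatr_eq0 -lt0n. Qed.

Let gaps_ge0 : 0 <= gaps.
Proof. by do 2 apply: sumr_ge0 => ? _; apply: lorentz_gap_ge0. Qed.

Lemma lorentz_mean_gap : K^-1 - lorentz xbar xbar = n%:R^-2 * gaps.
Proof.
rewrite lorentz_scale_sum.
have -> : gaps = n%:R * n%:R * K^-1 - \sum_(i < n) \sum_(j < n) lorentz (xs i) (xs j).
  under eq_bigr => i _ do rewrite sumrB sumr_const card_ord.
  by rewrite sumrB sumr_const card_ord; ring.
by field; rewrite K_neq0 n_neq0.
Qed.

Lemma lorentz_mean_le : lorentz xbar xbar <= K^-1.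
Proof.
by rewrite -subr_ge0 lorentz_mean_gap mulr_ge0 ?gaps_ge0 // invr_ge0 exprn_ge0 ?ler0n.
Qed.

Lemma lorentz_mean_eq_iff : lorentz xbar xbar = K^-1 <-> forall i j, xs i = xs j.
Proof.
split=> [mean_in i j | all_eq].
  have /eqP := lorentz_mean_gap; rewrite mean_in subrr eq_sym mulf_eq0.
  rewrite invr_eq0 expf_eq0 (negPf n_neq0) andbF /= => /eqP gaps0.
  have gap_ge0 k l : 0 <= K^-1 - lorentz (xs k) (xs l) by apply: lorentz_gap_ge0.
  have row0 : \sum_(l < n) (K^-1 - lorentz (xs i) (xs l)) = 0.
    by apply: (psumr_eq0P _ gaps0) => // k _; apply: sumr_ge0 => l _; apply: gap_ge0.
  apply: lorentz_gap_eq0 => //.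
  by apply: (psumr_eq0P _ row0) => // l _; apply: gap_ge0.
apply/esym/eqP; rewrite -subr_eq0 lorentz_mean_gap big1 ?mulr0 // => i _.
by apply: big1 => j _; rewrite (all_eq j i); case: (xs_in i) => -> _; rewrite subrr.
Qed.

Lemma radial_mean_gt0 : 0 < radial xbar.
Proof.
rewrite radial_scale_sum mulr_gt0 ?invr_gt0 ?ltr0n //.
rewrite (bigD1 (Ordinal n_gt0)) //= ltr_pwDl //; first by case: (xs_in (Ordinal n_gt0)).
by apply: sumr_ge0 => i _; case: (xs_in i) => _ /ltW.
Qed.

End Hyperboloid.

Theorem proposition4p3 (R : realType) (K : R) (d n : nat)
    (xs : 'I_n -> 'rV[R]_d.+1) :
  K < 0 -> (1 <= d)%N -> (2 <= n)%N ->
  (forall i, in_hyperboloid K (xs i)) ->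
  let xbar := n%:R^-1 *: \sum_(i < n) xs i in
  let mEuc := lorentz_proj K xbar in
  radial mEuc <= n%:R^-1 * \sum_(i < n) radial (xs i) /\
  (radial mEuc = n%:R^-1 * \sum_(i < n) radial (xs i) <->
     forall i j, xs i = xs j).
Proof.
move=> K_lt0 _ n_ge2 xs_in xbar mEuc.
have n_gt0 : (0 < n)%N by apply: leq_trans n_ge2.
have mean_in := lorentz_mean_le K_lt0 n_gt0 xs_in.
have mean_gt0 := radial_mean_gt0 n_gt0 xs_in.
rewrite /mEuc -radial_scale_sum; split; first exact: radial_lorentz_proj_le (ltW _).
rewrite -(lorentz_mean_eq_iff K_lt0 n_gt0 xs_in).
have proj_eq := radial_lorentz_proj_eq K_lt0 mean_in mean_gt0.
by split=> /eqP; [rewrite proj_eq | rewrite -proj_eq] => /eqP.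
Qed.
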